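(* Given a quantum state $\rho$ and a list of observables $(X_{1},\dots,X_{d})$ on a finite dimensional Hilbert space $\mathcal{H}$, let $A$ and $J$ be the $d\times d$ nonnegative matrices whose $(i,j)$th entries are $A_{ij}=\mathrm{Tr}\,\sqrt{\rho}X_{j}\sqrt{\rho}X_{i}$ and $J_{ij}=\mathrm{Tr}\,\rho X_{j}X_{i}$. Then both $A$ and $J\#J^{\top}$ are real matrices and satisfy \[ A\leq J\#J^{\top}, \] where $\#$ denotes the operator geometric mean.
   Context: Here $\mathcal{H}$ is a finite dimensional complex Hilbert space, a quantum state is a density operator $\rho\ge 0$ with $\mathrm{Tr}\,\rho=1$, and observables are selfadjoint operators on $\mathcal{H}$. For positive semidefinite matrices $P,Q$, the operator geometric mean $P\#Q$ (Kubo–Ando) can be characterized as $P\#Q=\max\left\{ X\geq0 : \begin{pmatrix}P & X \\ X & Q \end{pmatrix} \geq 0 \right\}$. $J^{\top}$ denotes the transpose of $J$ (equivalently its complex conjugate, since $J$ is Hermitian). *)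

From HB Require Import structures.
From mathcomp Require Import all_boot all_order all_algebra.
From Stdlib Require Import ClassicalEpsilon.
Set Implicit Arguments. Unset Strict Implicit. Unset Printing Implicit Defensive.
Import Order.TTheory GRing.Theory Num.Theory.
Local Open Scope ring_scope.

Definition adjmx (C : numClosedFieldType) m n (A : 'M[C]_(m, n)) : 'M[C]_(n, m) :=
  map_mx Num.conj (A^T).

Definition herm_mx (C : numClosedFieldType) n (A : 'M[C]_n) : Prop :=
  adjmx A = A.

Definition psdmx (C : numClosedFieldType) n (A : 'M[C]_n) : Prop :=
  herm_mx A /\ forall v : 'cV[C]_n, 0 <= (adjmx v *m A *m v) 0 0.

Definition loewner_le (C : numClosedFieldType) n (A B : 'M[C]_n) : Prop :=
  psdmx (B - A).

Definition density (C : numClosedFieldType) n (rho : 'M[C]_n) : Prop :=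
  psdmx rho /\ \tr rho = 1.

Definition psd_sqrt (C : numClosedFieldType) n (A : 'M[C]_n) : 'M[C]_n :=
  epsilon (inhabits 0) (fun S : 'M[C]_n => psdmx S /\ S *m S = A).

(* Kubo-Ando geometric mean via the maximal characterization:
   P # Q = max { X >= 0 : [[P, X], [X, Q]] >= 0 } (Loewner order). *)
Definition gm_feasible (C : numClosedFieldType) n (P Q X : 'M[C]_n) : Prop :=
  psdmx X /\ psdmx (block_mx P X X Q).

Definition gmean (C : numClosedFieldType) n (P Q : 'M[C]_n) : 'M[C]_n :=
  epsilon (inhabits 0) (fun X : 'M[C]_n =>
    gm_feasible P Q X /\ forall Y, gm_feasible P Q Y -> loewner_le Y X).

Definition real_mx (C : numClosedFieldType) m n (A : 'M[C]_(m, n)) : Prop :=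
  forall i j, A i j \is Num.real.

From HB Require Import structures.
From mathcomp Require Import all_boot all_order all_algebra.
From mathcomp Require Import sesquilinear spectral ring.
From Stdlib Require Import ClassicalEpsilon.
Import Order.TTheory GRing.Theory Num.Theory.
Local Open Scope ring_scope.
Set Implicit Arguments. Unset Strict Implicit. Unset Printing Implicit Defensive.

(** Write Y_u = sum_j u_j X_j and S = sqrt rho.  The quadratic form of the block
    matrix [[J, A], [A, J^T]] at (u, w) is tr (Z Z^* ) with Z = S Y_u + Y_w S, so A is
    feasible in the maximal characterisation of J # J^T, whence A <= J # J^T.  The real
    work is that this maximum exists for all positive semidefinite P and Q.  Congruence
    by an invertible matrix transports the problem, so an invertible P reduces to
    P = 1, where the maximum is sqrt Q because the square root is operator monotone.
    A singular P reduces to one with a vanishing first diagonal entry; this forces the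
    first row and column of P and of every feasible X to vanish, and after a unipotent
    congruence that splits off the first coordinate of Q the problem drops by one
    dimension.  Entrywise conjugation exchanges J and J^T and preserves feasibility,
    so it fixes J # J^T, which is therefore real. *)

Section ConjugateTranspose.
Variable C : numClosedFieldType.
Implicit Types m n p : nat.

Lemma adjmxK m n (A : 'M[C]_(m, n)) : adjmx (adjmx A) = A.
Proof. by apply/matrixP=> i j; rewrite !mxE conjCK. Qed.

Lemma adjmxM m n p (A : 'M[C]_(m, n)) (B : 'M[C]_(n, p)) :
  adjmx (A *m B) = adjmx B *m adjmx A.
Proof. by rewrite /adjmx trmx_mul map_mxM. Qed.

Lemma adjmxD m n (A B : 'M[C]_(m, n)) : adjmx (A + B) = adjmx A + adjmx B.
Proof. by rewrite /adjmx linearD map_mxD. Qed.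

Lemma adjmxN m n (A : 'M[C]_(m, n)) : adjmx (- A) = - adjmx A.
Proof. by rewrite /adjmx linearN map_mxN. Qed.

Lemma adjmx0 m n : adjmx (0 : 'M[C]_(m, n)) = 0.
Proof. by rewrite /adjmx trmx0 map_mx0. Qed.

Lemma adjmxZ m n a (A : 'M[C]_(m, n)) : adjmx (a *: A) = a^* *: adjmx A.
Proof. by rewrite /adjmx linearZ map_mxZ. Qed.

Lemma adjmx1 n : adjmx (1%:M : 'M[C]_n) = 1%:M.
Proof. by rewrite /adjmx trmx1 map_mx1. Qed.

Lemma adjmx_block m1 m2 n1 n2 (A : 'M[C]_(m1, n1)) (B : 'M[C]_(m1, n2))
    (D : 'M[C]_(m2, n1)) (E : 'M[C]_(m2, n2)) :
  adjmx (block_mx A B D E) = block_mx (adjmx A) (adjmx D) (adjmx B) (adjmx E).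
Proof. by rewrite /adjmx tr_block_mx map_block_mx. Qed.

Lemma adjmx_col m1 m2 n (A : 'M[C]_(m1, n)) (B : 'M[C]_(m2, n)) :
  adjmx (col_mx A B) = row_mx (adjmx A) (adjmx B).
Proof. by rewrite /adjmx tr_col_mx map_row_mx. Qed.

Lemma adjmx_row m n1 n2 (A : 'M[C]_(m, n1)) (B : 'M[C]_(m, n2)) :
  adjmx (row_mx A B) = col_mx (adjmx A) (adjmx B).
Proof. by rewrite /adjmx tr_row_mx map_col_mx. Qed.

Lemma adjmx_diag n (h : 'rV[C]_n) : adjmx (diag_mx h) = diag_mx (map_mx Num.conj h).
Proof. by rewrite /adjmx tr_diag_mx map_diag_mx. Qed.

Lemma adjmx_sum m n I (r : seq I) (P : pred I) (F : I -> 'M[C]_(m, n)) :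
  adjmx (\sum_(i <- r | P i) F i) = \sum_(i <- r | P i) adjmx (F i).
Proof. exact: (big_morph _ (@adjmxD _ _) (@adjmx0 _ _)). Qed.

Lemma mxtrace_adjmx n (A : 'M[C]_n) : \tr (adjmx A) = (\tr A)^*.
Proof. by rewrite /adjmx trace_map_mx mxtrace_tr. Qed.

Lemma mxtrace_mul_adjmx_ge0 m n (Z : 'M[C]_(m, n)) : 0 <= \tr (Z *m adjmx Z).
Proof.
apply: sumr_ge0 => i _; rewrite mxE; apply: sumr_ge0 => j _.
by rewrite !mxE mul_conjC_ge0.
Qed.

Lemma map_conj_mxK m n (A : 'M[C]_(m, n)) : map_mx Num.conj (map_mx Num.conj A) = A.
Proof. by apply/matrixP=> i j; rewrite !mxE conjCK. Qed.

Lemma herm_map_conj n (M : 'M[C]_n) : herm_mx M -> map_mx Num.conj M = M^T.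
Proof. by move=> M_herm; rewrite -{2}M_herm /adjmx map_trmx trmxK. Qed.

Definition sform m n (M : 'M[C]_(m, n)) (u : 'cV[C]_m) (w : 'cV[C]_n) : C :=
  (adjmx u *m M *m w) 0 0.

Lemma sformDl m n (M : 'M[C]_(m, n)) u1 u2 w :
  sform M (u1 + u2) w = sform M u1 w + sform M u2 w.
Proof. by rewrite /sform adjmxD !mulmxDl mxE. Qed.

Lemma sformDr m n (M : 'M[C]_(m, n)) u w1 w2 :
  sform M u (w1 + w2) = sform M u w1 + sform M u w2.
Proof. by rewrite /sform !mulmxDr mxE. Qed.

Lemma sformZl m n (M : 'M[C]_(m, n)) a u w : sform M (a *: u) w = a^* * sform M u w.
Proof. by rewrite /sform adjmxZ -!scalemxAl mxE. Qed.

Lemma sformZr m n (M : 'M[C]_(m, n)) a u w : sform M u (a *: w) = a * sform M u w.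
Proof. by rewrite /sform -scalemxAr mxE. Qed.

Lemma sformD m n (M N : 'M[C]_(m, n)) u w : sform (M + N) u w = sform M u w + sform N u w.
Proof. by rewrite /sform mulmxDr mulmxDl mxE. Qed.

Lemma sformN m n (M : 'M[C]_(m, n)) u w : sform (- M) u w = - sform M u w.
Proof. by rewrite /sform mulmxN mulNmx mxE. Qed.

Lemma sform0 m n u w : sform (0 : 'M[C]_(m, n)) u w = 0.
Proof. by rewrite /sform mulmx0 mul0mx mxE. Qed.

Lemma sform0l m n (M : 'M[C]_(m, n)) w : sform M 0 w = 0.
Proof. by rewrite /sform adjmx0 !mul0mx mxE. Qed.

Lemma sformMl m n p (M : 'M[C]_(m, n)) (B : 'M[C]_(m, p)) u w :
  sform M (B *m u) w = sform (adjmx B *m M) u w.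
Proof. by rewrite /sform adjmxM !mulmxA. Qed.

Lemma sformMr m n p (M : 'M[C]_(m, n)) (D : 'M[C]_(n, p)) u w :
  sform M u (D *m w) = sform (M *m D) u w.
Proof. by rewrite /sform !mulmxA. Qed.

Lemma conj_sform m n (M : 'M[C]_(m, n)) u w : (sform M u w)^* = sform (adjmx M) w u.
Proof.
have adj11 (x : 'M[C]_1) : (x 0 0)^* = adjmx x 0 0 by rewrite !mxE.
by rewrite /sform adj11 !adjmxM adjmxK mulmxA.
Qed.

Lemma sform_block m1 m2 n1 n2 (A : 'M[C]_(m1, n1)) (B : 'M[C]_(m1, n2))
    (D : 'M[C]_(m2, n1)) (E : 'M[C]_(m2, n2)) u1 u2 w1 w2 :
  sform (block_mx A B D E) (col_mx u1 u2) (col_mx w1 w2) =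
  sform A u1 w1 + sform B u1 w2 + sform D u2 w1 + sform E u2 w2.
Proof.
rewrite /sform adjmx_col mul_row_block mul_row_col !mulmxDl !mxE.
by rewrite -!addrA; congr (_ + _); rewrite addrCA.
Qed.

Lemma sform_deltal m n (M : 'M[C]_(m, n)) i w : sform M (delta_mx i 0) w = (M *m w) i 0.
Proof.
rewrite /sform /adjmx trmx_delta map_delta_mx ?rmorph0 ?rmorph1 //.
by rewrite -mulmxA -rowE !mxE.
Qed.

Lemma sform_delta m n (M : 'M[C]_(m, n)) i j :
  sform M (delta_mx i 0) (delta_mx j 0) = M i j.
Proof. by rewrite sform_deltal -colE mxE. Qed.

Lemma sform1_ge0 n (u : 'cV[C]_n) : 0 <= sform 1%:M u u.
Proof.
rewrite /sform mulmx1 mxE; apply: sumr_ge0 => i _.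
by rewrite !mxE mulrC mul_conjC_ge0.
Qed.

Lemma sform_map_conj m n (M : 'M[C]_(m, n)) u w :
  sform (map_mx Num.conj M) u w =
  (sform M (map_mx Num.conj u) (map_mx Num.conj w))^*.
Proof.
have conj11 (x : 'M[C]_1) : (x 0 0)^* = map_mx Num.conj x 0 0 by rewrite mxE.
by rewrite /sform conj11 !map_mxM /adjmx -map_trmx !map_conj_mxK.
Qed.

Lemma sform_sqr n (S : 'M[C]_n) v : herm_mx S ->
  sform (S *m S) v v = sform 1%:M (S *m v) (S *m v).
Proof. by move=> S_herm; rewrite sformMl sformMr S_herm mulmx1. Qed.

End ConjugateTranspose.

Section PositiveSemidefinite.
Variable C : numClosedFieldType.
Implicit Types m n p : nat.

Definition congmx m n (B : 'M[C]_(m, n)) (M : 'M[C]_m) : 'M[C]_n := adjmx B *m M *m B.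

Lemma congmxM m n p (B : 'M[C]_(m, n)) (D : 'M[C]_(n, p)) M :
  congmx D (congmx B M) = congmx (B *m D) M.
Proof. by rewrite /congmx adjmxM !mulmxA. Qed.

Lemma congmx1 n (M : 'M[C]_n) : congmx 1%:M M = M.
Proof. by rewrite /congmx adjmx1 mul1mx mulmx1. Qed.

Lemma congmxB m n (B : 'M[C]_(m, n)) M N : congmx B (M - N) = congmx B M - congmx B N.
Proof. by rewrite /congmx mulmxBr mulmxBl. Qed.

Lemma congmxK n (B : 'M[C]_n) M : B \in unitmx -> congmx (invmx B) (congmx B M) = M.
Proof. by move=> Bu; rewrite congmxM mulmxV // congmx1. Qed.

Lemma herm_congmx m n (B : 'M[C]_(m, n)) M : herm_mx M -> herm_mx (congmx B M).
Proof. by rewrite /herm_mx /congmx !adjmxM adjmxK => ->; rewrite mulmxA. Qed.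

Lemma sform_congmx m n (B : 'M[C]_(m, n)) M u w :
  sform (congmx B M) u w = sform M (B *m u) (B *m w).
Proof. by rewrite sformMl sformMr. Qed.

Lemma psdmx_congmx m n (B : 'M[C]_(m, n)) M : psdmx M -> psdmx (congmx B M).
Proof.
case=> M_herm M_pos; split; first exact: herm_congmx.
by move=> v; rewrite -/(sform _ v v) sform_congmx; apply: M_pos.
Qed.

Lemma loewner_le_congmx m n (B : 'M[C]_(m, n)) M N :
  loewner_le M N -> loewner_le (congmx B M) (congmx B N).
Proof. by rewrite /loewner_le -congmxB; apply: psdmx_congmx. Qed.

Lemma psdmx0 n : psdmx (0 : 'M[C]_n).
Proof. by split=> [|v]; rewrite /herm_mx ?adjmx0 // -/(sform _ v v) sform0. Qed.

Lemma psdmx_diag n (h : 'rV[C]_n) : (forall i, 0 <= h 0 i) -> psdmx (diag_mx h).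
Proof.
move=> h_ge0; split=> [|v].
  rewrite /herm_mx adjmx_diag; congr diag_mx; apply/rowP => i.
  by rewrite mxE; apply/CrealP/ger0_real.
rewrite mul_mx_diag mxE; apply: sumr_ge0 => i _.
by rewrite !mxE mulrAC mulr_ge0 // mulrC mul_conjC_ge0.
Qed.

Lemma psdmx_scalar n (c : C) : 0 <= c -> psdmx (c%:M : 'M[C]_n).
Proof. by move=> c_ge0; rewrite -diag_const_mx; apply: psdmx_diag => i; rewrite mxE. Qed.

Lemma psdmx_block0 m1 m2 (D : 'M[C]_m2) :
  psdmx D -> psdmx (block_mx (0 : 'M[C]_m1) 0 0 D).
Proof.
move=> /(psdmx_congmx (row_mx (0 : 'M_(m2, m1)) 1%:M)).
by rewrite /congmx adjmx_row adjmx0 adjmx1 mul_col_mx mul_col_row !mul0mx mul1mx mulmx0 mulmx1.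
Qed.

Lemma psdmx_ulsubmx m1 m2 (M : 'M[C]_(m1 + m2)) : psdmx M -> psdmx (ulsubmx M).
Proof.
move=> /(psdmx_congmx (col_mx 1%:M (0 : 'M_(m2, m1)))).
rewrite /congmx adjmx_col adjmx0 adjmx1 -{1}[M]submxK mul_row_block.
by rewrite !mul0mx !mul1mx !addr0 mul_row_col mulmx0 mulmx1 addr0.
Qed.

Lemma psdmx_drsubmx m1 m2 (M : 'M[C]_(m1 + m2)) : psdmx M -> psdmx (drsubmx M).
Proof.
move=> /(psdmx_congmx (col_mx (0 : 'M_(m1, m2)) 1%:M)).
rewrite /congmx adjmx_col adjmx0 adjmx1 -{1}[M]submxK mul_row_block.
by rewrite !mul0mx !mul1mx !add0r mul_row_col mulmx0 mulmx1 add0r.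
Qed.

Lemma psdmx_conj n (M : 'M[C]_n) : psdmx M -> psdmx (map_mx Num.conj M).
Proof.
case=> M_herm M_pos; split=> [|v].
  by move: M_herm; rewrite /herm_mx /adjmx -map_trmx => ->.
by rewrite -/(sform _ v v) sform_map_conj conjC_ge0; apply: M_pos.
Qed.

Lemma herm_spectral n (H : 'M[C]_n) : herm_mx H ->
  exists2 U : 'M[C]_n, U \is unitarymx &
  exists2 h : 'rV[C]_n, (forall i, h 0 i \is Num.real) & H = congmx U (diag_mx h).
Proof.
move=> H_adj; have H_herm : H \is hermsymmx.
  by apply/is_hermitianmxP; rewrite expr0 scale1r; exact: esym H_adj.
have /orthomx_spectralP H_eq := hermitian_normalmx H_herm.
exists (spectralmx H); first exact: spectral_unitarymx.
exists (spectral_diag H).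
  by move=> i; have /mxOverP := hermitian_spectral_diag_real H_herm; apply.
by rewrite [LHS]H_eq invmx_unitary // spectral_unitarymx.
Qed.

Lemma sform_congmx_diag n (U : 'M[C]_n) (h : 'rV[C]_n) i :
  U \is unitarymx ->
  sform (congmx U (diag_mx h)) (adjmx U *m delta_mx i 0) (adjmx U *m delta_mx i 0) = h 0 i.
Proof.
move=> /unitarymxP U_unitary.
by rewrite sform_congmx mulmxA U_unitary mul1mx sform_delta mxE eqxx mulr1n.
Qed.

Lemma psdmx_spectral n (M : 'M[C]_n) : psdmx M ->
  exists2 U : 'M[C]_n, U \is unitarymx &
  exists2 h : 'rV[C]_n, (forall i, 0 <= h 0 i) & M = congmx U (diag_mx h).
Proof.
move=> M_psd; have [U U_unitary [h _ M_eq]] := herm_spectral M_psd.1.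
exists U => //; exists h => // i.
by rewrite -(sform_congmx_diag h i U_unitary) -M_eq; apply: M_psd.2.
Qed.

Lemma psdmx_sqrt_exists n (M : 'M[C]_n) : psdmx M -> exists2 S, psdmx S & S *m S = M.
Proof.
move=> /psdmx_spectral [U /unitarymxP U_unitary [h h_ge0 ->]].
exists (congmx U (diag_mx (map_mx sqrtC h))).
  by apply/psdmx_congmx/psdmx_diag => i; rewrite mxE sqrtC_ge0.
rewrite /congmx !mulmxA -(mulmxA _ U) U_unitary mulmx1 -[_ *m _ *m diag_mx _]mulmxA mulmx_diag.
by congr (_ *m diag_mx _ *m _); apply/rowP => i; rewrite !mxE -expr2 sqrtCK.
Qed.

Lemma psd_sqrtP n (M : 'M[C]_n) :
  psdmx M -> psdmx (psd_sqrt M) /\ psd_sqrt M *m psd_sqrt M = M.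
Proof.
move=> /psdmx_sqrt_exists [S S_psd SM].
by apply: (epsilon_spec (inhabits 0) (fun S => psdmx S /\ S *m S = M)); exists S.
Qed.

Lemma loewner_le_anti n (A B : 'M[C]_n) : loewner_le A B -> loewner_le B A -> A = B.
Proof.
rewrite /loewner_le => /psdmx_spectral [U U_unitary [h h_ge0 BA_eq]] AB_psd.
have h0 : h = 0.
  apply/rowP => i; apply/eqP; rewrite mxE eq_le h_ge0 andbT.
  rewrite -(sform_congmx_diag h i U_unitary) -BA_eq -oppr_ge0 -sformN opprB.
  exact: AB_psd.2.
by move/eqP: BA_eq; rewrite h0 raddf0 /congmx mulmx0 mul0mx subr_eq0 => /eqP.
Qed.

Lemma herm_psdmxN_or_eigen n (H : 'M[C]_n) : herm_mx H ->
  psdmx (- H) \/ exists l v, [/\ 0 < l, H *m v = l *: v & sform 1%:M v v = 1].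
Proof.
move=> /herm_spectral [U U_unitary [h h_real H_eq]].
have [h_le0|] := boolP [forall i, h 0 i <= 0].
  left; have -> : - H = congmx U (diag_mx (- h)) by rewrite H_eq raddfN /congmx mulmxN mulNmx.
  by apply/psdmx_congmx/psdmx_diag => i; rewrite mxE oppr_ge0; apply: (forallP h_le0).
rewrite negb_forall => /existsP [i hi_gt0]; right.
move/unitarymxP: U_unitary => U_unitary.
exists (h 0 i), (adjmx U *m delta_mx i 0); split.
- by rewrite real_ltNge ?real0.
- rewrite H_eq /congmx -!mulmxA (mulmxA U) U_unitary mul1mx scalemxAr; congr (_ *m _).
  apply/matrixP => a b; rewrite mul_diag_mx !mxE.
  by case: (eqVneq a i) => [->|] //=; rewrite !mulr0n !mulr0.
- by rewrite sformMl sformMr adjmxK mulmx1 U_unitary sform_delta mxE eqxx.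
Qed.

Lemma loewner_le_sqr n (Y S : 'M[C]_n) : psdmx Y -> psdmx S ->
  loewner_le (Y *m Y) (S *m S) -> loewner_le Y S.
Proof.
move=> [Y_herm _] [S_herm S_pos] YS2.
(* An eigenvector v of Y - S with eigenvalue l > 0 would give |Y v| > |S v|,
   contradicting Y^2 <= S^2. *)
have YS_herm : herm_mx (Y - S) by rewrite /herm_mx adjmxD adjmxN Y_herm S_herm.
have [|[l [v [l_gt0 YSv v_norm]]]] := herm_psdmxN_or_eigen YS_herm.
  by rewrite /loewner_le opprB.
have l_real : l^* = l by apply/CrealP/gtr0_real.
have Yv : Y *m v = S *m v + l *: v by rewrite -YSv mulmxBl addrC subrK.
set s := sform S v v; have s_ge0 : 0 <= s := S_pos v.
have Y2 : sform (Y *m Y) v v = sform (S *m S) v v + (l * s + l * s + l * l).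
  rewrite !sform_sqr // Yv sformDl !sformDr !sformZl !sformZr v_norm l_real.
  rewrite (sformMl _ S v v) (sformMr _ S v v) S_herm mulmx1 mul1mx -/s.
  by rewrite mulr1 !addrA.
have := YS2.2 v; rewrite -/(sform _ v v) sformD sformN Y2 opprD addrA subrr add0r.
rewrite oppr_ge0 => Y2_le0.
have Y2_gt0 : 0 < l * s + l * s + l * l.
  by rewrite ltr_wpDl ?mulr_gt0 // addr_ge0 // mulr_ge0 // ltW.
by have := lt_le_trans Y2_gt0 Y2_le0; rewrite ltxx.
Qed.

Lemma psdmx_singular_congmx n (P : 'M[C]_n.+1) : psdmx P -> P \notin unitmx ->
  exists2 W : 'M[C]_n.+1, W \in unitmx & congmx W P 0 0 = 0.
Proof.
move=> /psdmx_spectral [U U_unitary [h _ P_eq]] P_sing.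
have U_unit := unitarymx_unit U_unitary.
have adjU_unit : adjmx U \in unitmx by rewrite map_unitmx unitmx_tr.
have /prodf_eq0 [i _ /eqP hi0] : \prod_i h 0 i == 0.
  rewrite -det_diag; apply: contraR P_sing.
  by rewrite P_eq !unitmx_mul adjU_unit U_unit unitmxE unitfE => ->.
exists (adjmx U *m tperm_mx 0 i); first by rewrite unitmx_mul adjU_unit unitmx_perm.
rewrite P_eq -congmxM (congmxM U) (unitarymxP U_unitary) congmx1 /congmx.
rewrite [adjmx _](_ : _ = tperm_mx 0 i); last by rewrite /adjmx tr_tperm_mx map_tperm_mx.
by rewrite -xcolE -xrowE /xcol /xrow !mxE eqxx mulr1n perm.tpermL.
Qed.

End PositiveSemidefinite.

Section GeometricMean.
Variable C : numClosedFieldType.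
Implicit Types m n : nat.

Definition gm_form n (P Q X : 'M[C]_n) u w :=
  sform P u u + sform X u w + sform X w u + sform Q w w.

Definition is_gmean n (P Q G : 'M[C]_n) :=
  gm_feasible P Q G /\ forall Y, gm_feasible P Q Y -> loewner_le Y G.

Lemma gm_feasible_form n (P Q X : 'M[C]_n) u w :
  gm_feasible P Q X -> 0 <= gm_form P Q X u w.
Proof. by case=> _ [_ /(_ (col_mx u w))]; rewrite -/(sform _ _ _) sform_block. Qed.

Lemma gm_feasibleP n (P Q X : 'M[C]_n) : herm_mx P -> herm_mx Q -> psdmx X ->
  (forall u w, 0 <= gm_form P Q X u w) -> gm_feasible P Q X.
Proof.
move=> P_herm Q_herm X_psd ge0; split=> //; split.
  by rewrite /herm_mx adjmx_block P_herm Q_herm X_psd.1.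
by move=> v; rewrite -/(sform _ v v) -[v]vsubmxK sform_block; apply: ge0.
Qed.

Lemma gm_feasible_psdmx n (P Q X : 'M[C]_n) :
  gm_feasible P Q X -> psdmx P /\ psdmx Q.
Proof.
case=> _ /[dup] /psdmx_ulsubmx + /psdmx_drsubmx.
by rewrite block_mxKul block_mxKdr.
Qed.

Lemma gm_feasible_congmx m n (B : 'M[C]_(m, n)) P Q X :
  gm_feasible P Q X -> gm_feasible (congmx B P) (congmx B Q) (congmx B X).
Proof.
case=> X_psd /(psdmx_congmx (block_mx B 0 0 B)) PQX_psd.
split; first exact: psdmx_congmx.
move: PQX_psd; rewrite /congmx adjmx_block !adjmx0 !mulmx_block.
by rewrite !(mulmx0, mul0mx, addr0, add0r).
Qed.

Lemma gm_feasible_conj n (P Q X : 'M[C]_n) : gm_feasible P Q X ->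
  gm_feasible (map_mx Num.conj P) (map_mx Num.conj Q) (map_mx Num.conj X).
Proof. by case=> X_psd /psdmx_conj; rewrite map_block_mx; split=> //; apply: psdmx_conj. Qed.

Lemma gm_feasibleC n (P Q X : 'M[C]_n) : gm_feasible P Q X -> gm_feasible Q P X.
Proof.
case=> X_psd /(psdmx_congmx (block_mx 0 1%:M 1%:M 0)) PQX_psd; split=> //.
move: PQX_psd; rewrite /congmx adjmx_block !adjmx0 !adjmx1 !mulmx_block.
by rewrite !(mulmx0, mul0mx, mulmx1, mul1mx, addr0, add0r).
Qed.

Lemma gmean_exists_congmx n (B : 'M[C]_n) P Q : B \in unitmx ->
  (exists G, is_gmean (congmx B P) (congmx B Q) G) -> exists G, is_gmean P Q G.
Proof.
move=> B_unit [G [G_feas G_max]]; exists (congmx (invmx B) G); split.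
  by rewrite -(congmxK P B_unit) -(congmxK Q B_unit); apply: gm_feasible_congmx.
move=> Y /(gm_feasible_congmx B) /G_max /(loewner_le_congmx (invmx B)).
by rewrite congmxK.
Qed.

Lemma gm_form1 n (Q Y : 'M[C]_n) u w : herm_mx Y ->
  gm_form 1%:M Q Y u w =
  sform 1%:M (u + Y *m w) (u + Y *m w) + sform (Q - Y *m Y) w w.
Proof.
move=> Y_herm; rewrite /gm_form sformDl !sformDr sformD sformN.
rewrite (sformMr _ Y u) (sformMl _ Y w u) (sformMl _ Y w) (sformMr _ Y w) Y_herm.
rewrite mul1mx !mulmx1; ring.
Qed.

Lemma gm_feasible1 n (Q Y : 'M[C]_n) : herm_mx Q ->
  gm_feasible 1%:M Q Y <-> psdmx Y /\ loewner_le (Y *m Y) Q.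
Proof.
move=> Q_herm; split=> [Y_feas|[Y_psd [_ QY_pos]]].
  have [Y_herm Y_pos] := Y_feas.1; split=> //; split.
    by rewrite /herm_mx adjmxD adjmxN adjmxM Y_herm Q_herm.
  move=> w; have := gm_feasible_form (- (Y *m w)) w Y_feas.
  by rewrite gm_form1 // addNr sform0l add0r.
apply: gm_feasibleP => // [|u w]; first by rewrite /herm_mx adjmx1.
by rewrite gm_form1 ?addr_ge0 ?sform1_ge0 ?QY_pos //; apply: Y_psd.1.
Qed.

Lemma is_gmean1 n (Q S : 'M[C]_n) : psdmx S -> S *m S = Q -> is_gmean 1%:M Q S.
Proof.
move=> S_psd SQ; have Q_herm : herm_mx Q by rewrite -SQ /herm_mx adjmxM S_psd.1.
split.
  by apply/(gm_feasible1 _ Q_herm); split; rewrite // SQ /loewner_le subrr; apply: psdmx0.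
by move=> Y /(gm_feasible1 _ Q_herm) [Y_psd]; rewrite -SQ; apply: loewner_le_sqr.
Qed.

Lemma gmean_exists_unitmx n (P Q : 'M[C]_n) : P \in unitmx -> psdmx P -> psdmx Q ->
  exists G, is_gmean P Q G.
Proof.
move=> P_unit /psdmx_sqrt_exists [S S_psd SP] Q_psd.
have S_unit : S \in unitmx by move: P_unit; rewrite -SP unitmx_mul => /andP[].
apply: (gmean_exists_congmx (B := invmx S)); first by rewrite unitmx_inv.
have -> : congmx (invmx S) P = 1%:M.
  rewrite /congmx /adjmx trmx_inv map_invmx -/(adjmx S) S_psd.1 -SP.
  by rewrite !mulmxA mulVmx // mul1mx mulmxV.
have [S' S'_psd S'Q] := psdmx_sqrt_exists (psdmx_congmx (invmx S) Q_psd).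
by exists S'; apply: is_gmean1.
Qed.

Lemma conj_affine_ge0_eq0 (c z : C) : (forall t, 0 <= c + t^* * z + t * z^*) -> z = 0.
Proof.
move=> ge0; apply/eqP/negPn/negP => z_neq0.
have c_ge0 : 0 <= c by have := ge0 0; rewrite rmorph0 !mul0r !addr0.
have c_real : c^* = c by apply/CrealP/ger0_real.
pose t := - (c + 1) / (2 * z^*).
have tE : t^* = - (c + 1) / (2 * z).
  by rewrite fmorph_div rmorphN rmorphD rmorphM rmorph1 rmorph_nat /= conjCK c_real.
have t_val : c + t^* * z + t * z^* = -1.
  by rewrite tE /t; field; rewrite conjC_eq0 z_neq0.
by have := ge0 t; rewrite t_val ler0N1.
Qed.

Lemma gm_feasible_ker n (P Q Y : 'M[C]_n) v :
  gm_feasible P Q Y -> sform P v v = 0 -> Y *m v = 0.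
Proof.
move=> Y_feas Pv0; have Y_herm := Y_feas.1.1.
have conjY w : sform Y w v = (sform Y v w)^* by rewrite conj_sform Y_herm.
have Yv0 w : sform Y v w = 0.
  apply: (@conj_affine_ge0_eq0 (sform Q w w)) => t.
  have := gm_feasible_form (t *: v) w Y_feas.
  rewrite /gm_form !sformZl !sformZr Pv0 conjY.
  by congr (0 <= _); ring.
by apply/colP => i; rewrite -sform_deltal conjY Yv0 conjC0 mxE.
Qed.

Lemma psdmx_ker n (M : 'M[C]_n) v : psdmx M -> sform M v v = 0 -> M *m v = 0.
Proof.
move=> M_psd; apply: (@gm_feasible_ker _ M M); split=> //.
move: (psdmx_congmx (row_mx 1%:M 1%:M) M_psd).
by rewrite /congmx adjmx_row adjmx1 mul_col_mx mul1mx mul_col_row mulmx1.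
Qed.

Lemma lshift_ord1 m (i : 'I_1) : lshift m i = 0.
Proof. by apply: val_inj; rewrite /= (ord1 i). Qed.

Lemma herm_col0_block m (Y : 'M[C]_(1 + m)) :
  herm_mx Y -> Y *m (delta_mx 0 0 : 'cV_(1 + m)) = 0 -> Y = block_mx 0 0 0 (drsubmx Y).
Proof.
move=> Y_herm /colP Y0.
have col0 i : Y i 0 = 0 by have := Y0 i; rewrite -colE !mxE.
have row0 j : Y 0 j = 0 by rewrite -Y_herm !mxE col0 conjC0.
by rewrite -{1}[Y]submxK; congr block_mx; apply/matrixP => i j; rewrite !mxE ?lshift_ord1.
Qed.

Lemma psdmx00_block m (M : 'M[C]_(1 + m)) :
  psdmx M -> M 0 0 = 0 -> M = block_mx 0 0 0 (drsubmx M).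
Proof.
move=> M_psd M00; apply: herm_col0_block; first exact: M_psd.1.
by apply: psdmx_ker; rewrite ?sform_delta.
Qed.

Lemma gm_form_block m (c : C) (P Q Y : 'M[C]_m) a u b w :
  gm_form (block_mx (0 : 'M_1) 0 0 P) (block_mx c%:M 0 0 Q) (block_mx 0 0 0 Y)
    (col_mx a u) (col_mx b w) =
  gm_form P Q Y u w + sform c%:M b b.
Proof.
by rewrite /gm_form !sform_block !sform0 !add0r !addr0 [sform c%:M b b + _]addrC addrA.
Qed.

Lemma is_gmean_block m (c : C) (P Q G : 'M[C]_m) :
  0 <= c -> herm_mx P -> herm_mx Q -> is_gmean P Q G ->
  is_gmean (block_mx (0 : 'M_1) 0 0 P) (block_mx c%:M 0 0 Q) (block_mx 0 0 0 G).
Proof.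
move=> c_ge0 P_herm Q_herm [G_feas G_max]; have c_psd := psdmx_scalar 1 c_ge0.
split=> [|Y Y_feas].
  apply: gm_feasibleP; rewrite /herm_mx ?adjmx_block ?adjmx0 ?P_herm ?Q_herm ?c_psd.1 //.
    exact: psdmx_block0 G_feas.1.
  move=> u w; rewrite -[u]vsubmxK -[w]vsubmxK gm_form_block.
  by rewrite addr_ge0 ?(gm_feasible_form _ _ G_feas) ?c_psd.2.
have Y_eq : Y = block_mx 0 0 0 (drsubmx Y).
  apply: herm_col0_block; first exact: Y_feas.1.1.
  by apply: (gm_feasible_ker Y_feas); rewrite sform_delta -(lshift_ord1 m 0) block_mxEul mxE.
have Y'_feas : gm_feasible P Q (drsubmx Y).
  apply: gm_feasibleP => // [|u w]; first exact: psdmx_drsubmx Y_feas.1.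
  have := gm_feasible_form (col_mx 0 u) (col_mx 0 w) Y_feas.
  by rewrite [in gm_form _ _ Y]Y_eq gm_form_block sform0l addr0.
rewrite Y_eq /loewner_le opp_block_mx add_block_mx !subr0.
exact/psdmx_block0/G_max.
Qed.

Lemma congmx_unipotent m (P : 'M[C]_m) (Q : 'M[C]_(1 + m)) : psdmx Q ->
  exists2 W, W \in unitmx &
    congmx W (block_mx (0 : 'M_1) 0 0 P) = block_mx 0 0 0 P /\
    exists Q', congmx W Q = block_mx (Q 0 0)%:M 0 0 Q'.
Proof.
move=> Q_psd; set c := Q 0 0; set b := ursubmx Q.
have c_herm : adjmx (c%:M : 'M_1) = c%:M.
  by apply: (psdmx_scalar 1 _).1; rewrite /c -sform_delta; apply: Q_psd.2.
have Q_eq : Q = block_mx c%:M b (adjmx b) (drsubmx Q).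
  have := Q_psd.1; rewrite /herm_mx -{1 2}[Q]submxK adjmx_block.
  move=> /eq_block_mx [_ _ bE _].
  by rewrite /b bE -{1}[Q]submxK [ulsubmx Q]mx11_scalar !mxE lshift_ord1.
have b0 : c = 0 -> b = 0 by move=> /(psdmx00_block Q_psd) Q_eq0; rewrite /b Q_eq0 block_mxKur.
(* y clears the off-diagonal blocks; when c = 0 the junk value c^-1 = 0 is harmless
   because then b = 0. *)
set y := - c^-1 *: b.
have ur0 : c%:M *m y + b = 0.
  have [/[dup] /b0 -> ->|c_neq0] := eqVneq c 0; first by rewrite mul_scalar_mx scale0r addr0.
  by rewrite /y mul_scalar_mx scalerA mulrN mulfV // scaleN1r addNr.
have dl0 : adjmx y *m c%:M + adjmx b = 0 by rewrite -c_herm -adjmxM -adjmxD ur0 adjmx0.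
exists (block_mx 1%:M y 0 1%:M); first by rewrite unitmxE det_ublock !det1 mulr1 unitr1.
split; last (eexists; rewrite {1}Q_eq);
  rewrite /congmx adjmx_block adjmx0 !adjmx1 !mulmx_block;
  by rewrite !(mulmx0, mul0mx, mulmx1, mul1mx, addr0, add0r) ?ur0 ?dl0.
Qed.

Theorem gmean_exists n (P Q : 'M[C]_n) : psdmx P -> psdmx Q -> exists G, is_gmean P Q G.
Proof.
elim: n P Q => [|m IH] P Q P_psd Q_psd.
  by apply: gmean_exists_unitmx; rewrite // unitmxE det_mx00 unitr1.
have [P_unit|P_sing] := boolP (P \in unitmx); first exact: gmean_exists_unitmx.
have [W1 W1_unit P1_00] := psdmx_singular_congmx P_psd P_sing.
apply: (gmean_exists_congmx W1_unit).
set P1 : 'M_(1 + m) := congmx W1 P; set Q1 : 'M_(1 + m) := congmx W1 Q.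
have P1_psd : psdmx P1 := psdmx_congmx W1 P_psd.
have Q1_psd : psdmx Q1 := psdmx_congmx W1 Q_psd.
have [W2 W2_unit [P2_eq [Q' Q2_eq]]] := congmx_unipotent (drsubmx P1) Q1_psd.
apply: (gmean_exists_congmx W2_unit).
rewrite (psdmx00_block P1_psd P1_00) P2_eq Q2_eq.
have Q'_psd : psdmx Q'.
  by have := psdmx_drsubmx (psdmx_congmx W2 Q1_psd); rewrite Q2_eq block_mxKdr.
have [G' G'_gmean] := IH _ _ (psdmx_drsubmx P1_psd) Q'_psd.
exists (block_mx 0 0 0 G'); apply: is_gmean_block => //.
- by rewrite -sform_delta; apply: Q1_psd.2.
- exact: (psdmx_drsubmx P1_psd).1.
- exact: Q'_psd.1.
Qed.

Lemma gmeanP n (P Q : 'M[C]_n) : psdmx P -> psdmx Q -> is_gmean P Q (gmean P Q).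
Proof. by move=> P_psd Q_psd; apply: epsilon_spec; apply: gmean_exists. Qed.

Lemma gmean_real n (P Q : 'M[C]_n) :
  psdmx P -> map_mx Num.conj P = Q -> real_mx (gmean P Q).
Proof.
move=> P_psd PQ; have Q_psd : psdmx Q by rewrite -PQ; apply: psdmx_conj.
have QP : map_mx Num.conj Q = P by rewrite -PQ map_conj_mxK.
have [G_feas G_max] := gmeanP P_psd Q_psd; set G := gmean P Q in G_feas G_max *.
have le_conj : loewner_le (map_mx Num.conj G) G.
  by apply/G_max/gm_feasibleC; have := gm_feasible_conj G_feas; rewrite PQ QP.
have := psdmx_conj le_conj; rewrite map_mxB map_conj_mxK => ge_conj.
move=> i j; apply/CrealP.
by have /matrixP /(_ i j) := loewner_le_anti le_conj ge_conj; rewrite mxE.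
Qed.

End GeometricMean.

Section TraceGram.
Variables (C : numClosedFieldType) (n d : nat) (X : 'I_d -> 'M[C]_n).
Hypothesis X_herm : forall k, herm_mx (X k).

Definition obs_comb (u : 'cV[C]_d) : 'M[C]_n := \sum_j u j 0 *: X j.

Definition trgram (L M : 'M[C]_n) : 'M[C]_d :=
  \matrix_(i, j) \tr (L *m X j *m M *m X i).

Lemma adjmx_obs_comb u : adjmx (obs_comb u) = \sum_i (u i 0)^* *: X i.
Proof. by rewrite adjmx_sum; apply: eq_bigr => i _; rewrite adjmxZ X_herm. Qed.

Lemma sform_trgram L M u w :
  sform (trgram L M) u w = \tr (L *m obs_comb w *m M *m adjmx (obs_comb u)).
Proof.
rewrite adjmx_obs_comb /obs_comb /sform mxE.
under eq_bigr => j _ do rewrite mxE mulr_suml.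
rewrite exchange_big /= mulmx_sumr raddf_sum; apply: eq_bigr => i _.
rewrite mulmx_sumr !mulmx_suml raddf_sum; apply: eq_bigr => j _.
by rewrite !mxE -!(scalemxAr, scalemxAl) !linearZ /= !mxtraceZ mulrC.
Qed.

Lemma herm_trgram L M : herm_mx L -> herm_mx M -> herm_mx (trgram L M).
Proof.
move=> L_herm M_herm; apply/matrixP => i j.
rewrite !mxE -mxtrace_adjmx !adjmxM L_herm M_herm !X_herm.
by rewrite !mulmxA mxtrace_mulC !mulmxA.
Qed.

Lemma trgram_real S : herm_mx S -> real_mx (trgram S S).
Proof.
move=> S_herm i j; apply/CrealP; rewrite mxE -mxtrace_adjmx !adjmxM S_herm !X_herm.
by rewrite !mulmxA mxtrace_mulC !mulmxA -[in LHS]mulmxA mxtrace_mulC !mulmxA.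
Qed.

Lemma psdmx_trgram S : psdmx S -> psdmx (trgram S S).
Proof.
move=> /[dup] [[S_herm _]] /psdmx_sqrt_exists [R [R_herm _] RS].
split=> [|u]; first exact: herm_trgram.
rewrite -/(sform _ u u) sform_trgram -RS.
have := mxtrace_mul_adjmx_ge0 (R *m obs_comb u *m R); rewrite !adjmxM R_herm.
by rewrite !mulmxA mxtrace_mulC !mulmxA.
Qed.

Lemma gm_feasible_trgram S : psdmx S ->
  gm_feasible (trgram (S *m S) 1%:M) (trgram 1%:M (S *m S)) (trgram S S).
Proof.
move=> /[dup] S_psd [S_herm _].
have SS_herm : herm_mx (S *m S) by rewrite /herm_mx adjmxM S_herm.
have one_herm : herm_mx (1%:M : 'M[C]_n) by rewrite /herm_mx adjmx1.
apply: gm_feasibleP => [|||u w]; try exact: herm_trgram; first exact: psdmx_trgram.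
have := mxtrace_mul_adjmx_ge0 (S *m obs_comb u + obs_comb w *m S).
rewrite /gm_form !sform_trgram mulmx1 mul1mx adjmxD !adjmxM S_herm.
rewrite !mulmxDl !mulmxDr !mxtraceD; set Yu := obs_comb u; set Yw := obs_comb w.
have tr_uu : \tr (S *m Yu *m (adjmx Yu *m S)) = \tr (S *m S *m Yu *m adjmx Yu).
  by rewrite !mulmxA mxtrace_mulC !mulmxA.
have tr_wu : \tr (Yw *m S *m (adjmx Yu *m S)) = \tr (S *m Yw *m S *m adjmx Yu).
  by rewrite !mulmxA mxtrace_mulC !mulmxA.
by rewrite tr_uu tr_wu !mulmxA addrA (addrAC (\tr (S *m S *m Yu *m adjmx Yu))).
Qed.

End TraceGram.

Theorem lemma11 (C : numClosedFieldType) (n d : nat) (rho : 'M[C]_n)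
  (X : 'I_d -> 'M[C]_n) :
  density rho ->
  (forall k, herm_mx (X k)) ->
  let A := \matrix_(i < d, j < d)
             \tr (psd_sqrt rho *m X j *m psd_sqrt rho *m X i) in
  let J := \matrix_(i < d, j < d) \tr (rho *m X j *m X i) in
  [/\ real_mx A, real_mx (gmean J J^T) & loewner_le A (gmean J J^T)].
Proof.
move=> [rho_psd _] X_herm A J.
have [S_psd SS] := psd_sqrtP rho_psd; set S := psd_sqrt rho in S_psd SS.
have J_eq : J = trgram X (S *m S) 1%:M.
  by apply/matrixP => i j; rewrite !mxE SS mulmx1.
have JT_eq : J^T = trgram X 1%:M (S *m S).
  by apply/matrixP => i j; rewrite !mxE SS mul1mx mxtrace_mulC mulmxA.
have A_feas : gm_feasible J J^T A.
  by rewrite JT_eq J_eq; apply: gm_feasible_trgram.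
have [J_psd JT_psd] := gm_feasible_psdmx A_feas.
split.
- exact: trgram_real S_psd.1.
- by apply: gmean_real; rewrite // herm_map_conj //; apply: J_psd.1.
- exact: (gmeanP J_psd JT_psd).2.
Qed.
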